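(* Let $n\ge 3$ and $a<b<c$ be elements of $\mathcal{C}_n=\{0,1,\dots,n-1\}$. Let $\triangle=\triangle^{(n)}\{a,b,c\}$, let $\mathcal{IT}=\{\alpha\in\triangle:\ \alpha(a)=a,\ \alpha(c)=c\}$ be the idempotent triangle, let $\mathcal{RI}$ be the set of right identities of $\triangle$, and let $Id\left(\mathcal{STR}^{(n)}\{a,c\}\right)=\{a_kc_{n-k}:\ a+1\le k\le c\}$. Then: (i) $\mathcal{RI}$ is a subsemiring of $\mathcal{IT}$ with exactly $(b-a)(c-b)$ elements; (ii) $\mathcal{IT}\setminus\mathcal{RI}$ is a subsemiring of $\mathcal{IT}$ with exactly $\frac12\left((c-b)^2+(b-a)^2+c-a\right)$ elements; (iii) both $Id\left(\mathcal{STR}^{(n)}\{a,c\}\right)$ and $\mathcal{IT}\setminus\mathcal{RI}$ are ideals of the semiring $\mathcal{IT}$.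
   Context: $\mathcal{C}_n=\{0,1,\dots,n-1\}$ is the chain with its usual order, regarded as a join-semilattice with $x\vee y=\max(x,y)$. $\widehat{\mathcal{E}}_{\mathcal{C}_n}$ denotes the set of all endomorphisms of $(\mathcal{C}_n,\vee)$, i.e. all order-preserving maps $\alpha:\mathcal{C}_n\to\mathcal{C}_n$ (it is not required that $\alpha(0)=0$). It is a semiring with addition $(\alpha+\beta)(x)=\max(\alpha(x),\beta(x))$ and multiplication written ''first $\alpha$, then $\beta$'': $(\alpha\cdot\beta)(x)=\beta(\alpha(x))$. For $x_1<\dots<x_r$ in $\mathcal{C}_n$ and nonnegative integers $k_1,\dots,k_r$ with $k_1+\dots+k_r=n$, the notation $(x_1)_{k_1}(x_2)_{k_2}\cdots(x_r)_{k_r}$ denotes the map sending the first $k_1$ elements $0,\dots,k_1-1$ to $x_1$, the next $k_2$ elements to $x_2$, and so on; a subscript $1$ may be omitted and a factor with subscript $0$ omitted. $\overline{x}$ denotes the constant map with value $x$. The triangle $\triangle^{(n)}\{a,b,c\}$ is the set of all $\alpha\in\widehat{\mathcal{E}}_{\mathcal{C}_n}$ with image contained in $\{a,b,c\}$ (a subsemiring). A right identity of $\triangle$ is an element $e\in\triangle$ with $\alpha\cdot e=\alpha$ for all $\alpha\in\triangle$. A subsemiring is a nonempty subset closed under $+$ and $\cdot$; an ideal $I$ of a semiring $R$ is a nonempty subset with $I+I\subseteq I$, $RI\subseteq I$, $IR\subseteq I$. *)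

From mathcomp Require Import all_boot.
Set Implicit Arguments. Unset Strict Implicit. Unset Printing Implicit Defensive.

Definition endo (n : nat) := {ffun 'I_n -> 'I_n}.

(* order-preserving = endomorphism of the join-semilattice (C_n, max) *)
Definition monotone n (f : endo n) : bool :=
  [forall x : 'I_n, forall y : 'I_n, (x <= y) ==> (f x <= f y)].

Definition eadd n (f g : endo n) : endo n :=
  [ffun x => if f x <= g x then g x else f x].

(* (alpha . beta)(x) = beta(alpha x)  ("first alpha, then beta") *)
Definition emul n (f g : endo n) : endo n := [ffun x => g (f x)].

Definition triangle n (a b c : 'I_n) : {set endo n} :=
  [set f : endo n | monotone f & [forall x, f x \in [:: a; b; c]]].

Definition IT n (a b c : 'I_n) : {set endo n} :=
  [set f in triangle a b c | (f a == a) && (f c == c)].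

Definition RI n (a b c : 'I_n) : {set endo n} :=
  [set e in triangle a b c | [forall f in triangle a b c, emul f e == f]].

(* the map a_k c_{n-k}: first k elements to a, the rest to c *)
Definition step n (a c : 'I_n) (k : nat) : endo n :=
  [ffun x : 'I_n => if x < k then a else c].

Definition IdSTR n (a c : 'I_n) : {set endo n} :=
  [set f : endo n | [exists k : 'I_n.+1, (a.+1 <= k <= c) && (f == step a c k)]].

Definition subsemiring n (S R : {set endo n}) : Prop :=
  [/\ S \subset R, S != set0,
      (forall f g, f \in S -> g \in S -> eadd f g \in S) &
      (forall f g, f \in S -> g \in S -> emul f g \in S)].

(* I is an ideal of the semiring R (R assumed closed under + and .) *)
Definition ideal n (I R : {set endo n}) : Prop :=
  [/\ I \subset R, I != set0,
      (forall f g, f \in I -> g \in I -> eadd f g \in I),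
      (forall r f, r \in R -> f \in I -> emul r f \in I) &
      (forall f r, f \in I -> r \in R -> emul f r \in I)].

From mathcomp Require Import all_boot zify.
Set Implicit Arguments. Unset Strict Implicit. Unset Printing Implicit Defensive.

(* Every map of the idempotent triangle is a staircase a_p b_(q-p) c_(n-q) with
   a < p <= q <= c, and the pair (p, q) is uniquely determined.  A map is a right
   identity iff it also fixes b, i.e. p <= b < q: a rectangle of (b-a)(c-b)
   parameters.  The remaining maps send b to a (b < p) or to c (q <= b), two
   triangles of parameters.  Since every map of the idempotent triangle fixes a
   and c, the property "never takes the value b" and "does not fix b" survive
   composition on either side, which gives the ideals. *)

Lemma sum_ord_between N l h : \sum_(i < N) (l <= i <= h) = minn N h.+1 - minn N l.
Proof.
elim: N => [|N IH]; first by rewrite big_ord0.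
by rewrite big_ord_recr /= IH; case: (leqP l N); case: (leqP N h) => /=; lia.
Qed.

Lemma card_ord_between N l h : h < N -> #|[set i : 'I_N | l <= i <= h]| = h.+1 - l.
Proof.
move=> hN; rewrite -sum1_card big_mkcond /=.
rewrite (eq_bigr (fun i : 'I_N => (l <= i <= h) : nat)) => [|i _]; last first.
  by rewrite inE; case: (_ && _).
by rewrite sum_ord_between; lia.
Qed.

Lemma card_pairs N (P : 'I_N -> 'I_N -> bool) :
  #|[set pq : 'I_N * 'I_N | P pq.1 pq.2]| = \sum_(i < N) #|[set j | P i j]|.
Proof.
rewrite -sum1_card; under [RHS]eq_bigr => i _ do rewrite -sum1_card.
by rewrite pair_big_dep /=; apply: eq_bigl => pq; rewrite !inE.
Qed.

Lemma sum_tail_double N lo hi : hi < N ->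
  2 * \sum_(i < N) (lo < i) * (hi.+1 - i) = (hi - lo) * (hi - lo).+1.
Proof.
elim: hi => [|hi IH] hiN.
  by rewrite big1 ?muln0 // => i _; case: (ltnP lo i) => //= loi; lia.
have -> : \sum_(i < N) (lo < i) * (hi.+2 - i)
          = \sum_(i < N) (lo < i) * (hi.+1 - i) + \sum_(i < N) (lo.+1 <= i <= hi.+1).
  by rewrite -big_split; apply: eq_bigr => i _ /=; lia.
by rewrite mulnDr IH ?sum_ord_between; [nia | exact: ltnW].
Qed.

Lemma card_pairs_le N lo hi : hi < N ->
  2 * #|[set pq : 'I_N * 'I_N | (lo < pq.1) && (pq.1 <= pq.2 <= hi)]|
  = (hi - lo) * (hi - lo).+1.
Proof.
move=> hiN; rewrite (card_pairs (fun i j => (lo < i) && (i <= j <= hi))).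
rewrite -(sum_tail_double lo hiN); congr (2 * _).
apply: eq_bigr => i _; case: (ltnP lo i) => _ /=.
  by rewrite mul1n card_ord_between.
by rewrite mul0n cards0.
Qed.

Lemma down_closed_initial n (P : pred 'I_n) :
  (forall x y : 'I_n, x <= y -> P y -> P x) ->
  exists2 k, k <= n & forall x : 'I_n, P x = (x < k).
Proof.
move=> downP.
have exk : exists k, [forall x : 'I_n, P x ==> (x < k)].
  by exists n; apply/forallP => x; rewrite ltn_ord implybT.
case: (ex_minnP exk) => k /forallP Pk kmin.
exists k => [|x]; first by apply: kmin; apply/forallP => x; rewrite ltn_ord implybT.
apply/idP/idP => [|xk]; first exact/implyP.
apply: contraTT xk => nPx; rewrite -leqNgt; apply: kmin; apply/forallP => y.
by apply/implyP => Py; rewrite ltnNge; apply: contra nPx => xy; apply: downP xy Py.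
Qed.

Lemma ord_cut_inj n (p q : nat) : p <= n -> q <= n ->
  (forall x : 'I_n, (x < p) = (x < q)) -> p = q.
Proof.
move=> pn qn E; apply/eqP; rewrite eqn_leq; apply/andP; split; rewrite leqNgt;
  apply/negP => lt.
- by have := E (Ordinal (leq_trans lt pn)); rewrite /= ltnn lt.
- by have := E (Ordinal (leq_trans lt qn)); rewrite /= ltnn lt.
Qed.

Lemma ideal_subsemiring n (I R : {set endo n}) : ideal I R -> subsemiring I R.
Proof.
by case=> IR nI addI _ mulI; split=> // f g fI gI; apply: mulI (subsetP IR g gI).
Qed.

Lemma val_eadd n (f g : endo n) x : eadd f g x = maxn (f x) (g x) :> nat.
Proof. by rewrite ffunE; case: leqP => h; lia. Qed.

Lemma eadd_cases n (f g : endo n) x : eadd f g x = f x \/ eadd f g x = g x.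
Proof. by rewrite ffunE; case: ifP; [right | left]. Qed.

Section Triangle.

Variables (n : nat) (a b c : 'I_n).

Lemma triangleP (f : endo n) :
  reflect ((forall x y : 'I_n, x <= y -> f x <= f y) /\ (forall x, f x \in [:: a; b; c]))
          (f \in triangle a b c).
Proof.
rewrite inE; apply: (iffP andP) => [[/forallP mf /forallP vf] | [mf vf]]; split=> //.
- by move=> x y; move/forallP/(_ y)/implyP: (mf x).
- by apply/forallP => x; apply/forallP => y; apply/implyP/mf.
- exact/forallP.
Qed.

Lemma triangle_add f g :
  f \in triangle a b c -> g \in triangle a b c -> eadd f g \in triangle a b c.
Proof.
move=> /triangleP[mf vf] /triangleP[mg vg]; apply/triangleP; split.
  by move=> x y xy; rewrite !val_eadd geq_max !leq_max mf ?mg ?orbT.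
by move=> x; case: (eadd_cases f g x) => ->.
Qed.

Lemma triangle_mul f g :
  f \in triangle a b c -> g \in triangle a b c -> emul f g \in triangle a b c.
Proof.
move=> /triangleP[mf vf] /triangleP[mg vg]; apply/triangleP.
by split=> [x y xy | x]; rewrite !ffunE //; apply/mg/mf.
Qed.

Lemma const_triangle v : v \in [:: a; b; c] -> [ffun=> v] \in triangle a b c.
Proof. by move=> vabc; apply/triangleP; split=> *; rewrite !ffunE. Qed.

Lemma in_IT (f : endo n) : (f \in IT a b c) = [&& f \in triangle a b c, f a == a & f c == c].
Proof. by rewrite inE. Qed.

Lemma IT_add f g : f \in IT a b c -> g \in IT a b c -> eadd f g \in IT a b c.
Proof.
rewrite !in_IT => /and3P[tf /eqP fa /eqP fc] /and3P[tg /eqP ga /eqP gc].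
by rewrite triangle_add // !ffunE fa ga fc gc !leqnn !eqxx.
Qed.

Lemma IT_mul f g : f \in IT a b c -> g \in IT a b c -> emul f g \in IT a b c.
Proof.
rewrite !in_IT => /and3P[tf /eqP fa /eqP fc] /and3P[tg /eqP ga /eqP gc].
by rewrite triangle_mul // !ffunE fa ga fc gc !eqxx.
Qed.

(* Composing with constants shows a right identity fixes a, b and c; conversely
   such a map is the identity on the image of every element of the triangle. *)
Lemma in_RI (e : endo n) : (e \in RI a b c) = (e \in IT a b c) && (e b == b).
Proof.
rewrite inE in_IT -!andbA.
apply/andP/and4P => [[te /forallP rid] | [te /eqP ea /eqP ec /eqP eb]].
  have fix_v v : v \in [:: a; b; c] -> e v == v.
    by move=> vabc; move/implyP/(_ (const_triangle vabc))/eqP/ffunP/(_ v): (rid [ffun=> v]);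
       rewrite !ffunE => ->.
  by split; rewrite // fix_v ?inE ?eqxx ?orbT.
split=> //; apply/forallP => f; apply/implyP => /triangleP[_ vf].
by apply/eqP/ffunP => x; rewrite ffunE; move: (vf x); rewrite !inE => /or3P[]/eqP->.
Qed.

Hypotheses (ab : a < b) (bc : b < c).

Let neq_ab : (a == b) = false. Proof. by apply/eqP => /(congr1 val) /=; lia. Qed.
Let neq_cb : (c == b) = false. Proof. by apply/eqP => /(congr1 val) /=; lia. Qed.

Lemma IT_fix (f : endo n) v : f \in IT a b c -> v \in [:: a; b; c] -> v != b -> f v = v.
Proof.
rewrite in_IT !inE => /and3P[_ /eqP fa /eqP fc] /or3P[] /eqP -> //.
by rewrite eqxx.
Qed.

Definition step3 (p q : nat) : endo n :=
  [ffun x : 'I_n => if x < p then a else if x < q then b else c].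

Lemma step3_IT p q : a < p -> p <= q -> q <= c -> step3 p q \in IT a b c.
Proof.
move=> ap pq qc; rewrite in_IT; apply/and3P; split.
- apply/triangleP; split=> [x y xy | x]; rewrite !ffunE.
    by repeat case: ifP => ?; lia.
  by repeat case: ifP; rewrite !inE eqxx ?orbT.
- by rewrite ffunE ap.
- by rewrite ffunE ifN ?ifN -?leqNgt //; lia.
Qed.

Lemma IT_range (f : endo n) x : f \in IT a b c -> f x \in [:: a; b; c].
Proof. by rewrite in_IT => /and3P[/triangleP[_ vf] _ _]. Qed.

Lemma IT_step3 (f : endo n) :
  f \in IT a b c -> exists p q, [/\ a < p, p <= q, q <= c & f = step3 p q].
Proof.
rewrite in_IT => /and3P[/triangleP[mf vf] /eqP fa /eqP fc].
have [p pn Ep] := @down_closed_initial n (fun x => f x <= a)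
  (fun x y xy fy => leq_trans (mf x y xy) fy).
have [q qn Eq] := @down_closed_initial n (fun x => f x < c)
  (fun x y xy fy => leq_ltn_trans (mf x y xy) fy).
have ap : a < p by rewrite -Ep fa.
have qc : q <= c by rewrite leqNgt -Eq fc ltnn.
have pq : p <= q.
  rewrite leqNgt; apply/negP => qp; set y := Ordinal (leq_trans qp pn).
  by have := Ep y; have := Eq y; rewrite /= ltnn qp; lia.
exists p, q; split=> //; apply/ffunP => x; rewrite ffunE -Ep -Eq.
by move: (vf x); rewrite !inE => /or3P[] /eqP ->; repeat case: ifP => ?; try lia.
Qed.

Lemma step3_eq_a p q x : (step3 p q x == a) = (x < p).
Proof.
rewrite ffunE; case: ifP => _; first exact: eqxx.
by case: ifP => _; apply/eqP => /(congr1 val) /=; lia.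
Qed.

Lemma step3_eq_c p q x : p <= q -> (step3 p q x == c) = (q <= x).
Proof.
move=> pq; rewrite ffunE; case: ifP => xp; last case: ifP => xq.
- by rewrite leqNgt (leq_trans xp pq); apply/negbTE/eqP => /(congr1 val) /=; lia.
- by rewrite leqNgt xq; apply/negbTE/eqP => /(congr1 val) /=; lia.
- by rewrite eqxx leqNgt xq.
Qed.

Lemma step3_inj p q p' q' : p <= q <= c -> p' <= q' <= c ->
  step3 p q = step3 p' q' -> p = p' /\ q = q'.
Proof.
move=> /andP[pq qc] /andP[pq' qc'] E; have cn := ltn_ord c.
split; apply: (@ord_cut_inj n); try lia.
  by move=> x; rewrite -(step3_eq_a p q) -(step3_eq_a p' q') E.
by move=> x; rewrite !ltnNge -(step3_eq_c _ pq) -(step3_eq_c _ pq') E.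
Qed.

Lemma card_IT_pred (Q : pred (endo n)) :
  #|[set f in IT a b c | Q f]| =
  #|[set pq : 'I_n * 'I_n | [&& a < pq.1, pq.1 <= pq.2 <= c & Q (step3 pq.1 pq.2)]]|.
Proof.
rewrite -(@card_in_imset _ _ (fun pq : 'I_n * 'I_n => step3 pq.1 pq.2)); last first.
  move=> [p q] [p' q'] /[!inE] /= /and3P[_ pqc _] /and3P[_ pqc' _] E.
  by have [/val_inj-> /val_inj->] := step3_inj pqc pqc' E.
apply: eq_card => f; rewrite inE; apply/andP/imsetP => [[fIT Qf] | [s]].
  have [p [q [ap pq qc fE]]] := IT_step3 fIT; have cn := ltn_ord c.
  exists (Ordinal (leq_ltn_trans (leq_trans pq qc) cn), Ordinal (leq_ltn_trans qc cn)) => //.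
  by rewrite inE /= ap pq qc -fE.
by rewrite inE => /and3P[ap /andP[pq qc] Qs] ->; split=> //; apply: step3_IT.
Qed.

Lemma step3_eq_b p q : (step3 p q b == b) = (p <= b < q).
Proof.
rewrite ffunE; case: ltnP => bp /=; first by rewrite neq_ab.
by case: ltnP => bq; rewrite ?eqxx ?neq_cb.
Qed.

Lemma card_RI : #|RI a b c| = (b - a) * (c - b).
Proof.
have -> : RI a b c = [set f in IT a b c | f b == b] by apply/setP => f; rewrite in_RI inE.
rewrite card_IT_pred (_ : [set pq | _] =
  setX [set p : 'I_n | a < p <= b] [set q : 'I_n | b < q <= c]); last first.
  by apply/setP => -[p q]; rewrite !inE /= step3_eq_b; lia.
by rewrite cardsX !card_ord_between.
Qed.

Lemma in_ITdRI (f : endo n) : (f \in IT a b c :\: RI a b c) = (f \in IT a b c) && (f b != b).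
Proof. by rewrite in_setD in_RI; case: (f \in _); rewrite /= ?andbT. Qed.

Lemma card_ITdRI : 2 * #|IT a b c :\: RI a b c| = (c - b) ^ 2 + (b - a) ^ 2 + c - a.
Proof.
have -> : IT a b c :\: RI a b c = [set f in IT a b c | f b != b].
  by apply/setP => f; rewrite in_ITdRI inE.
rewrite card_IT_pred (_ : [set pq | _] =
  [set pq : 'I_n * 'I_n | (a < pq.1) && (pq.1 <= pq.2 <= b)] :|:
  [set pq : 'I_n * 'I_n | (b < pq.1) && (pq.1 <= pq.2 <= c)]); last first.
  by apply/setP => -[p q]; rewrite !inE /= step3_eq_b; lia.
rewrite cardsU (_ : _ :&: _ = set0) ?cards0 ?subn0; last first.
  by apply/setP => -[p q]; rewrite !inE /=; lia.
by rewrite mulnDr !card_pairs_le //; nia.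
Qed.

Lemma in_IdSTR (f : endo n) : (f \in IdSTR a c) = (f \in IT a b c) && [forall x, f x != b].
Proof.
rewrite inE; apply/existsP/andP => [[k /andP[/andP[ak kc] /eqP->]] | [fIT /forallP fb]].
  have -> : step a c k = step3 k k by apply/ffunP => x; rewrite !ffunE; case: ifP.
  split; first exact: step3_IT.
  apply/forallP => x; rewrite ffunE; case: ltnP => xk; first by rewrite neq_ab.
  by rewrite neq_cb.
have [p [q [ap pq qc fE]]] := IT_step3 fIT; have cn := ltn_ord c.
have qp : q <= p.
  rewrite leqNgt; apply/negP => pq'.
  move: (fb (Ordinal (leq_ltn_trans (leq_trans pq qc) cn))).
  by rewrite fE ffunE /= ltnn pq' eqxx.
exists (Ordinal (leqW (leq_ltn_trans (leq_trans pq qc) cn))); rewrite /= ap (leq_trans pq qc).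
by rewrite fE; apply/eqP/ffunP => x; rewrite !ffunE; case: ifP => // xp; rewrite ifN //; lia.
Qed.

Lemma RI_subsemiring : subsemiring (RI a b c) (IT a b c).
Proof.
split.
- by apply/subsetP => f; rewrite in_RI => /andP[].
- apply/set0Pn; exists (step3 b c).
  by rewrite in_RI step3_eq_b leqnn bc step3_IT // ltnW.
- move=> f g; rewrite !in_RI => /andP[fIT /eqP fb] /andP[gIT /eqP gb].
  by rewrite IT_add // ffunE fb gb leqnn eqxx.
- move=> f g; rewrite !in_RI => /andP[fIT /eqP fb] /andP[gIT /eqP gb].
  by rewrite IT_mul // ffunE fb gb eqxx.
Qed.

Lemma ITdRI_ideal : ideal (IT a b c :\: RI a b c) (IT a b c).
Proof.
split.
- exact: subsetDl.
- apply/set0Pn; exists (step3 c c).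
  rewrite in_ITdRI; apply/andP; split; first by rewrite step3_IT //; lia.
  by rewrite step3_eq_b bc andbT -ltnNge.
- move=> f g; rewrite !in_ITdRI => /andP[fIT fb] /andP[gIT gb].
  by rewrite IT_add //; case: (eadd_cases f g b) => ->.
- move=> r f rIT; rewrite !in_ITdRI => /andP[fIT fb]; rewrite IT_mul //= ffunE.
  by case: (eqVneq (r b) b) => [-> // | rb]; rewrite IT_fix ?IT_range.
- move=> f r; rewrite !in_ITdRI => /andP[fIT fb] rIT; rewrite IT_mul //= ffunE.
  by rewrite IT_fix ?IT_range.
Qed.

Lemma IdSTR_ideal : ideal (IdSTR a c) (IT a b c).
Proof.
split.
- by apply/subsetP => f; rewrite in_IdSTR => /andP[].
- apply/set0Pn; exists (step a c c); rewrite inE; apply/existsP.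
  by exists (Ordinal (leqW (ltn_ord c))); rewrite /= leqnn eqxx !andbT; lia.
- move=> f g; rewrite !in_IdSTR => /andP[fIT /forallP fb] /andP[gIT /forallP gb].
  by rewrite IT_add //; apply/forallP => x; case: (eadd_cases f g x) => ->.
- move=> r f rIT; rewrite !in_IdSTR => /andP[fIT /forallP fb].
  by rewrite IT_mul //; apply/forallP => x; rewrite ffunE fb.
- move=> f r; rewrite !in_IdSTR => /andP[fIT /forallP fb] rIT.
  by rewrite IT_mul //; apply/forallP => x; rewrite ffunE IT_fix ?IT_range.
Qed.

End Triangle.

Theorem theorem33 (n : nat) (a b c : 'I_n) :
  3 <= n -> a < b -> b < c ->
  (subsemiring (RI a b c) (IT a b c) /\ #|RI a b c| = (b - a) * (c - b))
  /\ (subsemiring (IT a b c :\: RI a b c) (IT a b c) /\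
      2 * #|IT a b c :\: RI a b c| = (c - b) ^ 2 + (b - a) ^ 2 + c - a)
  /\ (ideal (IdSTR a c) (IT a b c) /\ ideal (IT a b c :\: RI a b c) (IT a b c)).
Proof.
(* [3 <= n] is implied by [a < b < c]. *)
move=> _ ab bc; split; [|split].
- by split; [exact: RI_subsemiring | exact: card_RI].
- by split; [exact/ideal_subsemiring/ITdRI_ideal | exact: card_ITdRI].
- by split; [exact: IdSTR_ideal | exact: ITdRI_ideal].
Qed.
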